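(* Let $D$ be a strong nonseparable digraph, let $H$ be a strong nonseparable subdigraph of $D$, and let $P=(x_0,x_1,\ldots,x_{r-1},x_r)$ be an ear of $H$ in $D$ with length $l(P)=r\geq 2$. Suppose $H$ has a kernel $N$ and one of the following holds: (1) $x_0,x_r\in N$ and $l(P)$ is even; (2) $x_0\in N$, $x_r\notin N$ and $l(P)$ is odd; (3) $x_0\notin N$ and $x_r\in N$; (4) $x_0,x_r\notin N$. Then $H'=H\cup P$ has a kernel.
   Context: All digraphs are finite, without loops or multiple arcs. Paths and cycles are directed; the length of a path is its number of arcs. A digraph is strong if for every ordered pair of vertices $x,y$ there is a directed path from $x$ to $y$; it is nonseparable if its underlying undirected graph is nonseparable (has no cut vertex). For a subdigraph $H$ of $D$, an ear of $H$ in $D$ is a directed path $(x_0,\ldots,x_r)$ in $D$ whose end vertices $x_0,x_r$ lie in $H$ and whose internal vertices $x_1,\ldots,x_{r-1}$ do not lie in $H$ (or a directed cycle with exactly one vertex $x_0=x_r$ in $H$). A kernel of a digraph is a set $N$ of vertices that is independent (no arc between two of its vertices) and absorbent (every vertex not in $N$ has an out-neighbour in $N$). *)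

From mathcomp Require Import all_boot.
Set Implicit Arguments. Unset Strict Implicit. Unset Printing Implicit Defensive.

(* A digraph D on a finite vertex type T is an arc relation e : rel T
   (loopless: irreflexive; no multiple arcs by construction). *)

Definition is_subdigraph (T : finType) (e : rel T) (V : {set T}) (E : rel T) :=
  forall x y, E x y -> [&& x \in V, y \in V & e x y].

Definition strong (T : finType) (V : {set T}) (E : rel T) :=
  forall x y, x \in V -> y \in V -> connect E x y.

(* nonseparable: the underlying undirected graph is connected and has no
   cut vertex (removing any vertex v leaves the rest connected). *)
Definition und_conn_avoid (T : finType) (E : rel T) (v : option T) : rel T :=
  [rel a b | [&& Some a != v, Some b != v & (E a b || E b a)]].

Definition nonseparable (T : finType) (V : {set T}) (E : rel T) :=
  (forall x y, x \in V -> y \in V -> connect (und_conn_avoid E None) x y) /\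
  (forall v x y, v \in V -> x \in V -> y \in V -> x != v -> y != v ->
     connect (und_conn_avoid E (Some v)) x y).

Definition kernel (T : finType) (V : {set T}) (E : rel T) (N : {set T}) :=
  [/\ N \subset V,
      (forall x y, x \in N -> y \in N -> ~~ E x y) &
      (forall x, x \in V -> x \notin N -> exists2 y, y \in N & E x y)].

(* An ear (x0, x1, ..., xr) of H, written as x0 and s = [:: x1; ...; xr]:
   a directed path of D with end vertices in VH and internal vertices outside
   VH; its vertices are pairwise distinct except that x0 = xr is allowed
   (the directed-cycle case).  Since x0 \in VH and internal vertices are not,
   distinctness amounts to uniq s. *)
Definition ear (T : finType) (e : rel T) (V : {set T}) (x0 : T) (s : seq T) :=
  [/\ path e x0 s, x0 \in V, last x0 s \in V,
      (forall z, z \in take (size s).-1 s -> z \notin V) & uniq s].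

Definition ear_union_V (T : finType) (V : {set T}) (x0 : T) (s : seq T) : {set T} :=
  V :|: [set z | z \in x0 :: s].
Definition ear_union_E (T : finType) (E : rel T) (x0 : T) (s : seq T) : rel T :=
  [rel x y | E x y || ((x, y) \in zip (x0 :: s) s)].

From mathcomp Require Import all_boot.
From mathcomp Require Import zify.

Set Implicit Arguments.
Unset Strict Implicit.
Unset Printing Implicit Defensive.

(* Extend N along the ear by every other internal vertex, counting back from
   x_r: x_j is added iff its distance r - j to x_r is even when x_r \in N and
   odd when x_r \notin N.  The new set then alternates along P, so it is
   independent and absorbing there, except possibly at the arc x_0 x_1.  The
   four case conditions say exactly that x_1 is not added when x_0 \in N,
   i.e. that r is even iff x_r \in N. *)

Lemma mem_zip_consP (T : eqType) (x0 : T) (s : seq T) x y :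
  reflect (exists2 k, k < size s & x = nth x0 (x0 :: s) k /\ y = nth x0 s k)
          ((x, y) \in zip (x0 :: s) s).
Proof.
have size_zip_cons : size (zip (x0 :: s) s) = size s.
  by rewrite size_zip /=; apply/minn_idPr.
apply: (iffP (nthP (x0, x0))); rewrite size_zip_cons => -[k lt_k_s].
  by rewrite nth_zip_cond size_zip_cons lt_k_s => -[<- <-]; exists k.
by move=> [-> ->]; exists k; rewrite // nth_zip_cond size_zip_cons lt_k_s.
Qed.

Lemma zip_cons_succ (T : eqType) (x0 : T) (s : seq T) x :
  x \in x0 :: s -> x != last x0 s -> exists y, (x, y) \in zip (x0 :: s) s.
Proof.
elim: s x0 => [|a s IHs] x0; first by rewrite inE => /eqP ->; rewrite eqxx.
rewrite in_cons => /predU1P [-> _|x_as x_last]; first by exists a; rewrite inE eqxx.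
by have [y xy] := IHs a x_as x_last; exists y; rewrite inE xy orbT.
Qed.

Lemma kernel_ear_union (T : finType) (e : rel T) (V : {set T}) (E : rel T)
    (x0 : T) (s : seq T) (N K : {set T}) :
  is_subdigraph e V E -> last x0 s \in V -> kernel V E N ->
  K \subset ear_union_V V x0 s -> {in V, forall x, (x \in K) = (x \in N)} ->
  (forall x y, (x, y) \in zip (x0 :: s) s -> ~~ ((x \in K) && (y \in K))) ->
  (forall x y, (x, y) \in zip (x0 :: s) s -> x \notin V -> x \notin K -> y \in K) ->
  kernel (ear_union_V V x0 s) (ear_union_E E x0 s) K.
Proof.
move=> subE last_V [subN indepN absorbN] sub_K K_V indep_ear absorb_ear.
split=> // [x y xK yK|x].
  apply/orP=> -[Exy|/indep_ear]; last by rewrite xK yK.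
  have /and3P [xV yV _] := subE x y Exy.
  have xN : x \in N by rewrite -K_V.
  have yN : y \in N by rewrite -K_V.
  by rewrite (negbTE (indepN x y xN yN)) in Exy.
rewrite /ear_union_V in_setU inE; have [xV _ xNK|xV /= x_ear xNK] := boolP (x \in V).
  have [|y yN Exy] := absorbN x xV; first by rewrite -K_V.
  by exists y; [rewrite K_V ?(subsetP subN) | apply/orP; left].
have [|y xy] := zip_cons_succ x_ear; first by apply: contraNneq xV => ->.
by exists y; [apply: absorb_ear xy xV xNK | apply/orP; right].
Qed.

(* [(size s).-1 - index x s] is the distance from [x] to the last vertex of [s]. *)
Definition alternating_part (T : finType) (s : seq T) (b : bool) : {set T} :=
  [set x in take (size s).-1 s | odd ((size s).-1 - index x s) != b].

Definition ear_extension (T : finType) (N : {set T}) (x0 : T) (s : seq T) : {set T} :=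
  N :|: alternating_part s (last x0 s \in N).

Section EarExtension.

Variables (T : finType) (e : rel T) (V N : {set T}) (x0 : T) (s : seq T).
Hypotheses (earP : ear e V x0 s) (subN : N \subset V).

Local Notation r := (size s).
Local Notation K := (ear_extension N x0 s).

Lemma alternating_part_notin b x : x \in alternating_part s b -> x \notin V.
Proof. by have [_ _ _ internal _] := earP; rewrite inE => /andP [/internal]. Qed.

Lemma ear_extension_on_V : {in V, forall x, (x \in K) = (x \in N)}.
Proof.
move=> x xV; rewrite in_setU.
by case: (boolP (x \in alternating_part _ _)) => [/alternating_part_notin|]; rewrite ?xV ?orbF.
Qed.

Lemma ear_extension_sub : K \subset ear_union_V V x0 s.
Proof.
apply/subsetP=> x; rewrite /ear_union_V !in_setU inE in_cons.
by case/orP=> [/(subsetP subN) -> // | /setIdP [/mem_take -> _]]; rewrite !orbT.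
Qed.

Lemma mem_ear_extension_nth k :
  k < r -> (nth x0 s k \in K) = (odd (r.-1 - k) != (last x0 s \in N)).
Proof.
have [_ _ last_V internal uniq_s] := earP; move=> lt_k_r.
have [lt_k_r1 | ->] : k < r.-1 \/ k = r.-1 by lia.
  have int_k : nth x0 s k \in take r.-1 s.
    by rewrite -(nth_take _ lt_k_r1) mem_nth // size_takel ?leq_pred.
  rewrite in_setU inE int_k index_uniq //.
  by rewrite (contraNF (subsetP subN _) (internal _ int_k)).
rewrite nth_last subnn in_setU (contraTF (@alternating_part_notin _ _) last_V).
by case: (_ \in N).
Qed.

Lemma ear_extension_alternates j :
  j.+1 < r -> (nth x0 s j \in K) = (nth x0 s j.+1 \notin K).
Proof.
move=> lt_j1_r; rewrite !mem_ear_extension_nth ?(ltnW lt_j1_r) //.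
rewrite -(subnSK (_ : j < r.-1)) /=; last by lia.
by case: odd; case: (_ \in N).
Qed.

Lemma ear_extension_arc_indep :
    (x0 \in N -> odd r != (last x0 s \in N)) ->
  forall x y, (x, y) \in zip (x0 :: s) s -> ~~ ((x \in K) && (y \in K)).
Proof.
have [_ x0V _ _ _] := earP.
move=> head_parity x y /mem_zip_consP [[|j] lt_r [-> ->]] /=; last first.
  by rewrite ear_extension_alternates //; case: (_ \in K).
rewrite ear_extension_on_V //; apply/negP=> /andP [x0N].
rewrite mem_ear_extension_nth // subn0; move: lt_r (head_parity x0N).
by case: (size s) => //= n _; case: odd; case: (_ \in N).
Qed.

Lemma ear_extension_arc_absorb x y :
  (x, y) \in zip (x0 :: s) s -> x \notin V -> x \notin K -> y \in K.
Proof.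
have [_ x0V _ _ _] := earP.
move=> /mem_zip_consP [[|j] lt_r [-> ->]] /=; first by rewrite x0V.
by rewrite ear_extension_alternates // negbK.
Qed.

End EarExtension.

Theorem mainTheorem9 (T : finType) (e : rel T) (VH : {set T}) (eH : rel T)
    (x0 : T) (s : seq T) (N : {set T}) :
  irreflexive e ->
  strong [set: T] e -> nonseparable [set: T] e ->
  is_subdigraph e VH eH -> strong VH eH -> nonseparable VH eH ->
  ear e VH x0 s -> 2 <= size s ->
  kernel VH eH N ->
  [\/ [/\ x0 \in N, last x0 s \in N & ~~ odd (size s)],
      [/\ x0 \in N, last x0 s \notin N & odd (size s)],
      x0 \notin N /\ last x0 s \in N
    | x0 \notin N /\ last x0 s \notin N] ->
  exists N' : {set T}, kernel (ear_union_V VH x0 s) (ear_union_E eH x0 s) N'.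
Proof.
move=> _ _ _ subE _ _ earP _ kerN cases.
have [subN _ _] := kerN; have [_ _ last_V _ _] := earP.
exists (ear_extension N x0 s).
apply: kernel_ear_union subE last_V kerN _ _ _ _.
- exact: ear_extension_sub.
- exact: (ear_extension_on_V _ earP).
- move=> x y; apply: (ear_extension_arc_indep earP subN) => x0N.
  by case: cases => [[_ -> /negbTE ->] | [_ /negbTE -> ->] | [] | []]; rewrite ?x0N.
- move=> x y; exact: (ear_extension_arc_absorb earP subN).
Qed.
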